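(* For $n\in\mathbb{N}^\star$ let $\phi_n(x)=\int_0^\pi e^{-2x\sin\eta}e^{2in\eta}\,\mathrm{d}\eta$. Then for every $x>0$ and $n\ge1$, $$\frac12\,\frac{(2n+1)x}{(n^2+x^2)\big((n+1)^2+x^2\big)}\le\phi_n(x)-\phi_{n+1}(x)\le4\,\frac{(2n+1)x}{(n^2+x^2)\big((n+1)^2+x^2\big)}.$$ *)

From Stdlib Require Import Reals.
From Coquelicot Require Import Coquelicot.
Open Scope R_scope.

Definition expi (t : R) : C := (cos t, sin t).

Definition phi (n : nat) (x : R) : C :=
  RInt (V := C_R_CompleteNormedModule)
    (fun eta => RtoC (exp (-2 * x * sin eta)) * expi (2 * INR n * eta))%C 0 PI.

(* With [z = 2 x] and [k = 2 n], [phi n x] is the real integral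
   [C_k(z) = \int_0^PI e^{-z sin t} cos (k t) dt], which solves the inhomogeneous
   modified Bessel equation [z^2 C'' + z C' - (z^2 + k^2) C = -2 z] with [C(0) = 0] and
   [|C| <= PI].  A maximum principle for this equation on [[0, +oo)] squeezes [C_k]
   between the explicit sub- and supersolutions [2 z / (z^2 + k^2) + c z / (z^2 + k^2)^2]
   with [c = -2] and [c = 3]; subtracting these bounds for [k = 2n] and [k = 2n + 2]
   gives the estimate. *)

From Stdlib Require Import Reals Lra Psatz.
From Coquelicot Require Import Coquelicot.
Open Scope R_scope.

Lemma continuity_pt_ex_derive (f : R -> R) (x : R) : ex_derive f x -> continuity_pt f x.
Proof.
  intros Hd. apply continuity_pt_filterlim.
  exact (ex_derive_continuous (K := R_AbsRing) (V := R_NormedModule) f x Hd).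
Qed.

Lemma ex_RInt_continuity (f : R -> R) (a b : R) :
  (forall t, continuity_pt f t) -> ex_RInt f a b.
Proof.
  intros Hf. apply (ex_RInt_continuous (V := R_CompleteNormedModule)).
  intros t _. apply continuity_pt_filterlim, Hf.
Qed.

Lemma is_derive_pos_right (f : R -> R) (c l : R) :
  is_derive f c l -> 0 < l -> exists h, 0 < h /\ forall y, c < y < c + h -> f c < f y.
Proof.
  intros Hd Hl.
  destruct (proj1 (is_derive_Reals f c l) Hd l Hl) as [delta Hdelta].
  exists delta. split; [apply cond_pos |].
  intros y Hy.
  assert (Hq := Hdelta (y - c) ltac:(lra) ltac:(rewrite Rabs_right; lra)).
  replace (c + (y - c)) with y in Hq by ring.
  apply Rabs_def2 in Hq.
  assert (Hpos : 0 < (f y - f c) / (y - c)) by lra.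
  assert (Hprod := Rmult_lt_0_compat _ _ Hpos (ltac:(lra) : 0 < y - c)).
  field_simplify in Hprod; lra.
Qed.

Definition bessel_op (K : R) (f f1 f2 : R -> R) (z : R) : R :=
  z ^ 2 * f2 z + z * f1 z - (z ^ 2 + K) * f z.

Section MaximumPrinciple.

Variables (K : R) (v v1 v2 : R -> R).
Hypothesis K_pos : 0 < K.
Hypothesis v_v1 : forall z, is_derive v z (v1 z).
Hypothesis v1_v2 : forall z, is_derive v1 z (v2 z).
Hypothesis bessel_op_ge0 : forall z, 0 < z -> 0 <= bessel_op K v v1 v2 z.

(* At a positive interior maximum the equation forces v'' > 0, which is impossible. *)
Lemma bessel_max_principle (b : R) :
  0 < b -> v 0 < 0 -> v b < 0 -> forall z, 0 <= z <= b -> v z <= 0.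
Proof.
  intros Hb Hv0 Hvb z Hz.
  destruct (continuity_ab_maj v 0 b) as [c [Hmax Hc]]; [lra | |].
  { intros y _. apply continuity_pt_ex_derive. eexists. apply v_v1. }
  destruct (Rle_or_lt (v c) 0) as [Hneg | Hpos]; [specialize (Hmax z Hz); lra |].
  exfalso.
  assert (Hc_in : 0 < c < b).
  { split; apply Rnot_le_lt; intro; [assert (c = 0) | assert (c = b)]; subst; lra. }
  assert (Hdp : derivable_pt v c) by (exists (v1 c); apply is_derive_Reals, v_v1).
  assert (Hv1 : v1 c = 0).
  { rewrite <- (derive_pt_eq_0 v c (v1 c) Hdp (proj1 (is_derive_Reals _ _ _) (v_v1 c))).
    apply (deriv_maximum v 0 b c Hdp); try lra.
    intros y Hy Hy'. apply Hmax. lra. }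
  assert (Hv2 : 0 < v2 c).
  { assert (HL := bessel_op_ge0 c (proj1 Hc_in)). unfold bessel_op in HL.
    rewrite Hv1 in HL.
    assert (0 < (c ^ 2 + K) * v c) by (apply Rmult_lt_0_compat; nra).
    nra. }
  destruct (is_derive_pos_right v1 c (v2 c) (v1_v2 c) Hv2) as [h [Hh Hincr]].
  set (y := c + Rmin h (b - c) / 2).
  assert (Hy : c < y < c + h /\ y <= b).
  { unfold y. assert (Rmin h (b - c) <= h) by apply Rmin_l.
    assert (Rmin h (b - c) <= b - c) by apply Rmin_r.
    assert (0 < Rmin h (b - c)) by (apply Rmin_pos; lra). lra. }
  destruct (MVT_cor2 v v1 c y) as [xi [Hvy Hxi]]; [lra | |].
  { intros t _. apply is_derive_Reals, v_v1. }
  assert (Hxi_pos : 0 < v1 xi) by (rewrite <- Hv1; apply Hincr; lra).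
  assert (v y <= v c) by (apply Hmax; lra).
  nra.
Qed.

End MaximumPrinciple.

(* [eps (1 + z)] has [bessel_op K _ <= 0] when [K >= 1]; subtracting it makes [a]
   negative at [0] and, by boundedness, at some large [r], so the maximum principle
   applies on [[0, r]]. *)
Lemma bessel_comparison (K M : R) (a a1 a2 : R -> R) :
  1 <= K ->
  (forall z, is_derive a z (a1 z)) -> (forall z, is_derive a1 z (a2 z)) ->
  (forall z, 0 < z -> 0 <= bessel_op K a a1 a2 z) ->
  a 0 <= 0 -> (forall z, 0 <= z -> a z <= M) ->
  forall z, 0 <= z -> a z <= 0.
Proof.
  intros HK Ha1 Ha2 HL Ha0 HM z Hz.
  apply Rnot_lt_le. intros Haz.
  set (eps := a z / (2 * (1 + z))).
  assert (Heps : 0 < eps) by (apply Rdiv_lt_0_compat; lra).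
  set (r := z + (Rabs M + 1) / eps).
  assert (Hr : 0 < (Rabs M + 1) / eps)
    by (apply Rdiv_lt_0_compat; [pose proof (Rabs_pos M) |]; lra).
  assert (Hzr : z < r) by (unfold r; lra).
  assert (Hshift : a z - eps * (1 + z) <= 0).
  { refine (bessel_max_principle K (fun y => a y - eps * (1 + y))
             (fun y => a1 y - eps) (fun y => a2 y - 0) _ _ _ _ r _ _ _ z _); try lra.
    - intros y. apply (is_derive_minus a (fun y => eps * (1 + y)) y (a1 y) eps); [apply Ha1 |].
      auto_derive; [auto | ring].
    - intros y. apply (is_derive_minus a1 (fun _ => eps) y (a2 y) 0);
        [apply Ha2 | exact (is_derive_const eps y)].
    - intros y Hy. specialize (HL y Hy). unfold bessel_op in *.
      assert (0 <= eps * ((y ^ 2 + K) * (1 + y) - y)) by (apply Rmult_le_pos; nra).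
      nra.
    - specialize (HM r ltac:(lra)).
      assert (eps * (1 + r) = eps * (1 + z) + (Rabs M + 1)) by (unfold r; field; lra).
      pose proof (Rle_abs M). nra. }
  assert (eps * (1 + z) = a z / 2) by (unfold eps; field; lra).
  lra.
Qed.

Definition exp_sin_integral (P : R -> R) (z : R) : R :=
  RInt (fun t => exp (- (z * sin t)) * P t) 0 PI.

Definition msin (P : R -> R) (t : R) : R := - sin t * P t.

Lemma continuity_msin (P : R -> R) :
  (forall t, continuity_pt P t) -> forall t, continuity_pt (msin P) t.
Proof.
  intros HP t. apply continuity_pt_mult; [| apply HP].
  apply continuity_pt_ex_derive. auto_derive. auto.
Qed.

Lemma ex_RInt_exp_sin (P : R -> R) (z : R) :
  (forall t, continuity_pt P t) -> ex_RInt (fun t => exp (- (z * sin t)) * P t) 0 PI.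
Proof.
  intros HP. apply ex_RInt_continuity. intros t.
  apply continuity_pt_mult; [| apply HP].
  apply continuity_pt_ex_derive. auto_derive. auto.
Qed.

Lemma continuity_2d_pt_snd (f : R -> R) (u v : R) :
  continuity_pt f v -> continuity_2d_pt (fun _ t => f t) u v.
Proof.
  intros Hf. apply (continuity_1d_2d_pt_comp f (fun _ t => t)); [exact Hf |].
  apply continuity_2d_pt_id2.
Qed.

Lemma is_derive_exp_sin_integral (P : R -> R) (z : R) :
  (forall t, continuity_pt P t) ->
  is_derive (exp_sin_integral P) z (exp_sin_integral (msin P) z).
Proof.
  intros HP. unfold exp_sin_integral, msin.
  set (f := fun u t => exp (- (u * sin t)) * P t).
  assert (Hdf : forall u t, is_derive (fun u => f u t) u (exp (- (u * sin t)) * (- sin t * P t))).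
  { intros u t. unfold f. auto_derive; [auto | ring]. }
  rewrite (RInt_ext _ (fun t => Derive (fun u => f u t) z)).
  2: { intros t _. symmetry. apply is_derive_unique, Hdf. }
  apply (is_derive_RInt_param f 0 PI z).
  - apply filter_forall. intros u t _. eexists. apply Hdf.
  - intros t _.
    apply (continuity_2d_pt_ext (fun u v => exp (- (u * sin v)) * (- sin v * P v))).
    { intros u v. symmetry. apply is_derive_unique, Hdf. }
    assert (Hsin : forall v, continuity_pt sin v)
      by (intros v; apply continuity_pt_ex_derive; auto_derive; auto).
    apply continuity_2d_pt_mult.
    + apply (continuity_1d_2d_pt_comp exp (fun u v => - (u * sin v))).
      * apply continuity_pt_ex_derive. auto_derive. auto.
      * apply continuity_2d_pt_opp, continuity_2d_pt_mult;
          [apply continuity_2d_pt_id1 | apply continuity_2d_pt_snd, Hsin].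
    + apply continuity_2d_pt_mult; [apply continuity_2d_pt_opp |];
        apply continuity_2d_pt_snd; [apply Hsin | apply HP].
  - apply filter_forall. intros u. apply ex_RInt_exp_sin, HP.
Qed.

Lemma exp_le_1 (x : R) : x <= 0 -> exp x <= 1.
Proof.
  intros Hx. rewrite <- exp_0.
  destruct (Rle_lt_or_eq_dec _ _ Hx) as [Hlt | ->]; [left; apply exp_increasing |]; lra.
Qed.

Lemma exp_sin_integral_bound (P : R -> R) (z : R) :
  (forall t, continuity_pt P t) -> (forall t, Rabs (P t) <= 1) -> 0 <= z ->
  Rabs (exp_sin_integral P z) <= PI.
Proof.
  intros HPc HP1 Hz. unfold exp_sin_integral.
  replace PI with ((PI - 0) * 1) at 2 by ring.
  apply abs_RInt_le_const; [pose proof PI_RGT_0; lra | apply ex_RInt_exp_sin, HPc |].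
  intros t Ht. rewrite Rabs_mult, (Rabs_right (exp _)) by (left; apply exp_pos).
  assert (0 <= z * sin t) by (apply Rmult_le_pos; [| apply sin_ge_0]; lra).
  assert (exp (- (z * sin t)) <= 1) by (apply exp_le_1; lra).
  specialize (HP1 t). pose proof (Rabs_pos (P t)). pose proof (exp_pos (- (z * sin t))).
  nra.
Qed.

Definition cosk (k t : R) : R := cos (k * t).

Lemma continuity_cosk (k t : R) : continuity_pt (cosk k) t.
Proof. apply continuity_pt_ex_derive. unfold cosk. auto_derive. auto. Qed.

Lemma cosk_bound (k t : R) : Rabs (cosk k t) <= 1.
Proof. apply Rabs_le, COS_bound. Qed.

Section EvenFrequency.

Variable k : R.
Hypothesis cos_kPI : cos (k * PI) = 1.
Hypothesis sin_kPI : sin (k * PI) = 0.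

Local Notation C := (exp_sin_integral (cosk k)).
Local Notation C1 := (exp_sin_integral (msin (cosk k))).
Local Notation C2 := (exp_sin_integral (msin (msin (cosk k)))).

Lemma continuity_msin_cosk (t : R) : continuity_pt (msin (cosk k)) t.
Proof. apply continuity_msin, continuity_cosk. Qed.

(* The combined integrand is [- d/dt (k e^{-z sin t} sin kt - z cos t e^{-z sin t} cos kt)],
   whose antiderivative changes by [2 z] over [0, PI]. *)
Lemma bessel_op_exp_sin_cos (z : R) : bessel_op (k ^ 2) C C1 C2 z = -2 * z.
Proof.
  set (E := fun P t => exp (- (z * sin t)) * P t).
  set (G := fun t => k * exp (- (z * sin t)) * sin (k * t)
                     - z * cos t * exp (- (z * sin t)) * cos (k * t)).
  assert (Hcomb : is_RInt (fun t => z ^ 2 * E (msin (msin (cosk k))) t + z * E (msin (cosk k)) t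
                                    - (z ^ 2 + k ^ 2) * E (cosk k) t) 0 PI
                    (bessel_op (k ^ 2) C C1 C2 z)).
  { unfold bessel_op, E.
    apply (is_RInt_minus (V := R_NormedModule)); [apply (is_RInt_plus (V := R_NormedModule)) |];
      apply (is_RInt_scal (V := R_NormedModule)), (RInt_correct (V := R_CompleteNormedModule)),
        ex_RInt_exp_sin;
      repeat apply continuity_msin; apply continuity_cosk. }
  assert (HG : is_RInt (fun t => - (z ^ 2 * E (msin (msin (cosk k))) t + z * E (msin (cosk k)) t
                                    - (z ^ 2 + k ^ 2) * E (cosk k) t)) 0 PI (minus (G PI) (G 0))).
  { apply (is_RInt_derive (V := R_CompleteNormedModule)).
    - intros t _. unfold G, E, msin, cosk. auto_derive; [auto |].
      pose proof (f_equal (Rmult (z ^ 2 * exp (- (z * sin t)) * cos (k * t))) (sin2_cos2 t)).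
      unfold Rsqr in *. lra.
    - intros t _. apply continuity_pt_filterlim, continuity_pt_ex_derive.
      unfold E, msin, cosk. auto_derive. auto. }
  assert (HG0 : minus (G PI) (G 0) = 2 * z).
  { unfold minus, plus, opp, G; simpl.
    rewrite cos_kPI, sin_kPI, cos_PI, sin_PI, cos_0, sin_0, !Rmult_0_r, Ropp_0, exp_0,
      cos_0, sin_0.
    ring. }
  rewrite HG0 in HG.
  apply (is_RInt_opp (V := R_NormedModule)) in HG.
  apply (is_RInt_ext _ _ _ _ _ (fun t _ => Ropp_involutive _)) in HG.
  rewrite <- (is_RInt_unique _ _ _ _ Hcomb), (is_RInt_unique _ _ _ _ HG).
  unfold opp; simpl. ring.
Qed.

Lemma exp_sin_cos_0 : k <> 0 -> C 0 = 0.
Proof.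
  intros Hk. unfold exp_sin_integral, cosk.
  rewrite (RInt_ext _ (fun t => cos (k * t))).
  2: { intros t _. rewrite Rmult_0_l, Ropp_0, exp_0. apply Rmult_1_l. }
  assert (Hint : is_RInt (fun t => cos (k * t)) 0 PI (minus (sin (k * PI) / k) (sin (k * 0) / k))).
  { apply (is_RInt_derive (V := R_CompleteNormedModule) (fun t => sin (k * t) / k)).
    - intros t _. auto_derive; [auto | field; exact Hk].
    - intros t _. apply continuity_pt_filterlim, continuity_pt_ex_derive. auto_derive. auto. }
  rewrite (is_RInt_unique _ _ _ _ Hint).
  unfold minus, plus, opp; simpl. rewrite sin_kPI, Rmult_0_r, sin_0. field. exact Hk.
Qed.

Section Comparison.

Variables (w w1 w2 : R -> R) (M : R).
Hypothesis k2_ge1 : 1 <= k ^ 2.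
Hypothesis w_w1 : forall z, is_derive w z (w1 z).
Hypothesis w1_w2 : forall z, is_derive w1 z (w2 z).

Let k_neq0 : k <> 0.
Proof. intros ->. simpl in k2_ge1. lra. Qed.

Let is_derive_C (z : R) : is_derive C z (C1 z).
Proof. apply is_derive_exp_sin_integral, continuity_cosk. Qed.

Let is_derive_C1 (z : R) : is_derive C1 z (C2 z).
Proof. apply is_derive_exp_sin_integral, continuity_msin_cosk. Qed.

Let C_bound (z : R) : 0 <= z -> Rabs (C z) <= PI.
Proof. apply exp_sin_integral_bound; [apply continuity_cosk | apply cosk_bound]. Qed.

Lemma exp_sin_cos_le_supersolution :
  (forall z, 0 < z -> bessel_op (k ^ 2) w w1 w2 z + 2 * z <= 0) ->
  0 <= w 0 -> (forall z, 0 <= z -> - M <= w z) ->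
  forall z, 0 <= z -> C z <= w z.
Proof.
  intros Hsuper Hw0 HwM z Hz.
  enough (C z - w z <= 0) by lra.
  apply (bessel_comparison (k ^ 2) (PI + M) (fun y => C y - w y) (fun y => C1 y - w1 y)
           (fun y => C2 y - w2 y)); auto.
  - intros y. apply (is_derive_minus C w); auto.
  - intros y. apply (is_derive_minus C1 w1); auto.
  - intros y Hy. specialize (Hsuper y Hy).
    pose proof (bessel_op_exp_sin_cos y). unfold bessel_op in *. lra.
  - rewrite exp_sin_cos_0 by exact k_neq0. lra.
  - intros y Hy. specialize (HwM y Hy). specialize (C_bound y Hy).
    apply Rabs_le_between in C_bound; lra.
Qed.

Lemma exp_sin_cos_ge_subsolution :
  (forall z, 0 < z -> 0 <= bessel_op (k ^ 2) w w1 w2 z + 2 * z) ->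
  w 0 <= 0 -> (forall z, 0 <= z -> w z <= M) ->
  forall z, 0 <= z -> w z <= C z.
Proof.
  intros Hsub Hw0 HwM z Hz.
  enough (w z - C z <= 0) by lra.
  apply (bessel_comparison (k ^ 2) (M + PI) (fun y => w y - C y) (fun y => w1 y - C1 y)
           (fun y => w2 y - C2 y)); auto.
  - intros y. apply (is_derive_minus w C); auto.
  - intros y. apply (is_derive_minus w1 C1); auto.
  - intros y Hy. specialize (Hsub y Hy).
    pose proof (bessel_op_exp_sin_cos y). unfold bessel_op in *. lra.
  - rewrite exp_sin_cos_0 by exact k_neq0. lra.
  - intros y Hy. specialize (HwM y Hy). specialize (C_bound y Hy).
    apply Rabs_le_between in C_bound; lra.
Qed.

End Comparison.

End EvenFrequency.

(* [2 z / (z^2 + K)] solves the equation up to a residual of relative order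
   [1 / (z^2 + K)]; the correction [c z / (z^2 + K)^2] makes the residual one-signed
   for [c = 3] and for [c = -2]. *)
Definition barrier (K c z : R) : R := 2 * z / (z ^ 2 + K) + c * z / (z ^ 2 + K) ^ 2.

Definition barrier1 (K c z : R) : R :=
  2 / (z ^ 2 + K) - 4 * z ^ 2 / (z ^ 2 + K) ^ 2
  + c * (1 / (z ^ 2 + K) ^ 2 - 4 * z ^ 2 / (z ^ 2 + K) ^ 3).

Definition barrier2 (K c z : R) : R :=
  - 12 * z / (z ^ 2 + K) ^ 2 + 16 * z ^ 3 / (z ^ 2 + K) ^ 3
  + c * (- 12 * z / (z ^ 2 + K) ^ 3 + 24 * z ^ 3 / (z ^ 2 + K) ^ 4).

Section Barrier.

Variables (K c : R).
Hypothesis K_pos : 0 < K.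

Let denom_pos (z : R) : 0 < z ^ 2 + K.
Proof. nra. Qed.

Lemma is_derive_barrier (z : R) : is_derive (barrier K c) z (barrier1 K c z).
Proof.
  pose proof (denom_pos z). unfold barrier, barrier1.
  auto_derive.
  - repeat split; repeat apply Rmult_integral_contrapositive_currified; apply Rgt_not_eq; nra.
  - field. lra.
Qed.

Lemma is_derive_barrier1 (z : R) : is_derive (barrier1 K c) z (barrier2 K c z).
Proof.
  pose proof (denom_pos z). unfold barrier1, barrier2.
  auto_derive.
  - repeat split; repeat apply Rmult_integral_contrapositive_currified; apply Rgt_not_eq; nra.
  - field. lra.
Qed.

Lemma bessel_op_barrier (z : R) :
  bessel_op K (barrier K c) (barrier1 K c) (barrier2 K c) z + 2 * z =
  z / (z ^ 2 + K) ^ 4 *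
    (2 * ((z ^ 2) ^ 2 - 6 * z ^ 2 * K + K ^ 2) * (z ^ 2 + K)
     + c * (9 * (z ^ 2) ^ 2 - 14 * z ^ 2 * K + K ^ 2 - (z ^ 2 + K) ^ 3)).
Proof. pose proof (denom_pos z). unfold bessel_op, barrier, barrier1, barrier2. field. lra. Qed.

End Barrier.

Lemma barrier_supersolution (K z : R) : 4 <= K -> 0 < z ->
  bessel_op K (barrier K 3) (barrier1 K 3) (barrier2 K 3) z + 2 * z <= 0.
Proof.
  intros HK Hz. rewrite bessel_op_barrier by lra.
  assert (Hw : 0 < z / (z ^ 2 + K) ^ 4) by (apply Rdiv_lt_0_compat; [lra | apply pow_lt; nra]).
  set (u := z ^ 2) in *. assert (Hu : 0 <= u) by (unfold u; nra).
  assert (0 <= u * u * (K - 4)) by (apply Rmult_le_pos; nra).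
  assert (0 <= K * K * (K - 4)) by (apply Rmult_le_pos; nra).
  assert (2 * (u ^ 2 - 6 * u * K + K ^ 2) * (u + K)
          + 3 * (9 * u ^ 2 - 14 * u * K + K ^ 2 - (u + K) ^ 3) <= 0) by nra.
  nra.
Qed.

Lemma barrier_subsolution (K z : R) : 4 <= K -> 0 < z ->
  0 <= bessel_op K (barrier K (-2)) (barrier1 K (-2)) (barrier2 K (-2)) z + 2 * z.
Proof.
  intros HK Hz. rewrite bessel_op_barrier by lra.
  assert (Hw : 0 < z / (z ^ 2 + K) ^ 4) by (apply Rdiv_lt_0_compat; [lra | apply pow_lt; nra]).
  set (u := z ^ 2) in *. assert (Hu : 0 <= u) by (unfold u; nra).
  assert (0 <= 2 * (u ^ 2 - 6 * u * K + K ^ 2) * (u + K)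
               + -2 * (9 * u ^ 2 - 14 * u * K + K ^ 2 - (u + K) ^ 3)).
  { assert (0 <= (u - K) ^ 2) by apply pow2_ge_0.
    destruct (Rle_or_lt 5 (u + K)); [| nra].
    assert (0 <= (u - K) ^ 2 * (u + K - 5)) by (apply Rmult_le_pos; lra).
    nra. }
  nra.
Qed.

Lemma exp_sin_cos_even_bounds (j : nat) (z : R) : (1 <= j)%nat -> 0 <= z ->
  barrier ((2 * INR j) ^ 2) (-2) z <= exp_sin_integral (cosk (2 * INR j)) z
  <= barrier ((2 * INR j) ^ 2) 3 z.
Proof.
  intros Hj Hz.
  set (K := (2 * INR j) ^ 2).
  assert (HK : 4 <= K) by (apply (le_INR 1) in Hj; simpl in Hj; unfold K; nra).
  assert (Hcos : cos (2 * INR j * PI) = 1)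
    by (rewrite <- (Rplus_0_l (2 * INR j * PI)), cos_period; apply cos_0).
  assert (Hsin : sin (2 * INR j * PI) = 0)
    by (rewrite <- (Rplus_0_l (2 * INR j * PI)), sin_period; apply sin_0).
  assert (Hden : forall y, 0 < y ^ 2 + K) by (intros y; nra).
  assert (Hbarrier0 : forall c, barrier K c 0 = 0)
    by (intros c; unfold barrier; field; specialize (Hden 0); lra).
  split.
  - apply (exp_sin_cos_ge_subsolution _ Hcos Hsin _ (barrier1 K (-2)) (barrier2 K (-2)) 1);
      fold K; try lra.
    + intros y. apply is_derive_barrier. lra.
    + intros y. apply is_derive_barrier1. lra.
    + intros y Hy. apply barrier_subsolution; lra.
    + rewrite Hbarrier0. lra.
    + intros y Hy. specialize (Hden y). unfold barrier.
      assert (2 * y / (y ^ 2 + K) <= 1)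
        by (apply Rmult_le_reg_r with (y ^ 2 + K); [lra | field_simplify; nra]).
      assert (0 <= y / (y ^ 2 + K) ^ 2) by (apply Rdiv_le_0_compat, pow_lt; lra).
      unfold Rdiv in *. nra.
  - apply (exp_sin_cos_le_supersolution _ Hcos Hsin _ (barrier1 K 3) (barrier2 K 3) 0);
      fold K; try lra.
    + intros y. apply is_derive_barrier. lra.
    + intros y. apply is_derive_barrier1. lra.
    + intros y Hy. apply barrier_supersolution; lra.
    + rewrite Hbarrier0. lra.
    + intros y Hy. specialize (Hden y). unfold barrier.
      assert (0 <= y / (y ^ 2 + K)) by (apply Rdiv_le_0_compat; lra).
      assert (0 <= y / (y ^ 2 + K) ^ 2) by (apply Rdiv_le_0_compat, pow_lt; lra).
      unfold Rdiv in *. nra.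
Qed.

Lemma RInt_antisymmetric_PI (f : R -> R) :
  (forall t, f (PI - t) = - f t) -> (forall t, continuity_pt f t) -> RInt f 0 PI = 0.
Proof.
  intros Hf Hc.
  assert (Hflip := RInt_comp_lin (V := R_CompleteNormedModule) f (-1) PI 0 PI).
  replace (-1 * 0 + PI) with PI in Hflip by ring.
  replace (-1 * PI + PI) with 0 in Hflip by ring.
  rewrite (RInt_ext _ f) in Hflip.
  2: { intros t _. unfold scal; simpl. unfold mult; simpl.
       replace (-1 * t + PI) with (PI - t) by ring. rewrite Hf. ring. }
  rewrite <- (opp_RInt_swap (V := R_CompleteNormedModule) f 0 PI)
    in Hflip by (apply ex_RInt_continuity, Hc).
  specialize (Hflip (ex_RInt_continuity f PI 0 Hc)).
  unfold opp in Hflip; simpl in Hflip. lra.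
Qed.

(* The imaginary part of [phi n x] vanishes because its integrand is odd about [PI / 2]. *)
Lemma phi_exp_sin_integral (n : nat) (x : R) :
  phi n x = RtoC (exp_sin_integral (cosk (2 * INR n)) (2 * x)).
Proof.
  unfold phi.
  set (fr := fun t => exp (-2 * x * sin t) * cos (2 * INR n * t)).
  set (fi := fun t => exp (-2 * x * sin t) * sin (2 * INR n * t)).
  assert (Hfr : ex_RInt fr 0 PI).
  { apply ex_RInt_continuity. intros t. apply continuity_pt_ex_derive. unfold fr.
    auto_derive. auto. }
  assert (Hfi_cont : forall t, continuity_pt fi t).
  { intros t. apply continuity_pt_ex_derive. unfold fi. auto_derive. auto. }
  assert (Hpair : is_RInt (V := C_R_NormedModule)
     (fun eta => (RtoC (exp (-2 * x * sin eta)) * expi (2 * INR n * eta))%C) 0 PI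
     (RInt fr 0 PI, RInt fi 0 PI)).
  { apply (is_RInt_ext (V := C_R_NormedModule) (fun t => (fr t, fi t))).
    { intros t _. unfold fr, fi, expi, RtoC, Cmult; simpl. f_equal; ring. }
    apply (is_RInt_fct_extend_pair (U := R_NormedModule) (V := R_NormedModule)
             (fun t => (fr t, fi t)));
      apply (RInt_correct (V := R_CompleteNormedModule)); [exact Hfr |].
    apply ex_RInt_continuity, Hfi_cont. }
  rewrite (is_RInt_unique (V := C_R_CompleteNormedModule) _ _ _ _ Hpair).
  unfold RtoC. f_equal.
  - unfold exp_sin_integral, cosk, fr. apply RInt_ext. intros t _.
    do 2 f_equal. ring.
  - apply RInt_antisymmetric_PI; [| exact Hfi_cont].
    intros t. unfold fi. rewrite sin_PI_x.
    replace (2 * INR n * (PI - t)) with (- (2 * INR n * t) + 2 * INR n * PI) by ring.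
    rewrite sin_period, sin_neg. ring.
Qed.

Lemma barrier_scaled (N x c : R) : 0 < N ^ 2 + x ^ 2 ->
  barrier ((2 * N) ^ 2) c (2 * x) = x / (N ^ 2 + x ^ 2) + c * x / (8 * (N ^ 2 + x ^ 2) ^ 2).
Proof. intros H. unfold barrier. field. lra. Qed.

Lemma barrier_gap_bounds (N x ca cb : R) : 1 <= N -> 0 < x ->
  barrier ((2 * N) ^ 2) (-2) (2 * x) <= ca <= barrier ((2 * N) ^ 2) 3 (2 * x) ->
  barrier ((2 * (N + 1)) ^ 2) (-2) (2 * x) <= cb <= barrier ((2 * (N + 1)) ^ 2) 3 (2 * x) ->
  / 2 * ((2 * N + 1) * x / ((N ^ 2 + x ^ 2) * ((N + 1) ^ 2 + x ^ 2))) <= ca - cb /\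
  ca - cb <= 4 * ((2 * N + 1) * x / ((N ^ 2 + x ^ 2) * ((N + 1) ^ 2 + x ^ 2))).
Proof.
  intros HN Hx Hca Hcb.
  assert (Ha : 0 < N ^ 2 + x ^ 2) by nra.
  assert (Hb : 0 < (N + 1) ^ 2 + x ^ 2) by nra.
  rewrite !barrier_scaled in Hca, Hcb by assumption.
  set (a := N ^ 2 + x ^ 2) in *. set (b := (N + 1) ^ 2 + x ^ 2) in *.
  assert (Hba : b = a + (2 * N + 1)) by (unfold a, b; ring).
  assert (Ha1 : 1 <= a) by (unfold a; nra).
  assert (Hgap : (2 * N + 1) * x / (a * b) = x / a - x / b) by (rewrite Hba; field; lra).
  assert (Hscale : 0 < x / (8 * a ^ 2 * b ^ 2))
    by (apply Rdiv_lt_0_compat; [lra | apply Rmult_lt_0_compat; [| apply pow_lt]; nra]).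
  rewrite Hgap. split.
  - assert (Hlow : (x / a + -2 * x / (8 * a ^ 2)) - (x / b + 3 * x / (8 * b ^ 2))
                   - / 2 * (x / a - x / b)
                   = x / (8 * a ^ 2 * b ^ 2) * (4 * (2 * N + 1) * a * b - 2 * b ^ 2 - 3 * a ^ 2))
      by (rewrite Hba; field; lra).
    assert (0 <= 4 * (2 * N + 1) * a * b - 2 * b ^ 2 - 3 * a ^ 2) by (rewrite Hba; nra).
    nra.
  - assert (Hup : 4 * (x / a - x / b)
                  - ((x / a + 3 * x / (8 * a ^ 2)) - (x / b + -2 * x / (8 * b ^ 2)))
                  = x / (8 * a ^ 2 * b ^ 2) * (24 * (2 * N + 1) * a * b - 3 * b ^ 2 - 2 * a ^ 2))
      by (rewrite Hba; field; lra).
    assert (0 <= 24 * (2 * N + 1) * a * b - 3 * b ^ 2 - 2 * a ^ 2) by (rewrite Hba; nra).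
    nra.
Qed.

Theorem proposition3p7 (n : nat) (x : R) (hn : (1 <= n)%nat) (hx : 0 < x) :
  exists d : R,
    (phi n x - phi (S n) x)%C = RtoC d /\
    / 2 * ((2 * INR n + 1) * x / ((INR n ^ 2 + x ^ 2) * ((INR n + 1) ^ 2 + x ^ 2))) <= d /\
    d <= 4 * ((2 * INR n + 1) * x / ((INR n ^ 2 + x ^ 2) * ((INR n + 1) ^ 2 + x ^ 2))).
Proof.
  exists (exp_sin_integral (cosk (2 * INR n)) (2 * x)
          - exp_sin_integral (cosk (2 * INR (S n))) (2 * x)).
  split.
  - rewrite !phi_exp_sin_integral. unfold Cminus, Cplus, Copp, RtoC; simpl. f_equal; ring.
  - assert (HN : 1 <= INR n) by (apply (le_INR 1) in hn; exact hn).
    assert (Hn := exp_sin_cos_even_bounds n (2 * x) hn ltac:(lra)).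
    assert (HSn := exp_sin_cos_even_bounds (S n) (2 * x) ltac:(lia) ltac:(lra)).
    rewrite S_INR in HSn |- *.
    apply barrier_gap_bounds; assumption.
Qed.
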